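(* There are absolute constants $c,C>0$ such that for every $n$ and every connected simple undirected graph $G_0$ on $n$ nodes that has exactly $k\ge 1$ fewer edges than the complete graph on $n$ nodes, the triangulation process started from $G_0$ satisfies $$\Pr\big[G_{\lfloor c\,n\ln k\rfloor}\text{ is complete}\big]\le C e^{-k^{1/4}},$$ i.e., with probability at least $1-O(e^{-k^{1/4}})$ it takes $\Omega(n\log k)$ rounds to reach the complete graph.
   Context: Triangulation process: $G_0$ is a connected simple undirected graph on an $n$-node vertex set $V$. Given $G_t$, in round $t$ every node $x$ independently picks two neighbors $v,w$ of $x$ in $G_t$, independently and uniformly at random, and the edge $\{v,w\}$ is added (nothing happens if $v=w$ or the edge already exists); $G_{t+1}$ is $G_t$ together with all edges added in round $t$. Edges are never removed. *)

From mathcomp Require Import all_boot.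
From Stdlib Require Import Reals.

Set Implicit Arguments.
Unset Strict Implicit.
Unset Printing Implicit Defensive.

(* A graph on the vertex set 'I_n is given by its set of ORDERED adjacent
   pairs E : {set 'I_n * 'I_n}; an undirected edge {x,y} corresponds to
   the two pairs (x,y) and (y,x). *)
Definition graph (n : nat) := {set 'I_n * 'I_n}.

Definition simple_graph n (E : graph n) : Prop :=
  (forall x y : 'I_n, ((x, y) \in E) = ((y, x) \in E)) /\
  (forall x : 'I_n, (x, x) \notin E).

Definition connected_graph n (E : graph n) : Prop :=
  forall x y : 'I_n, connect (fun a b => (a, b) \in E) x y.

Definition num_edges n (E : graph n) : nat := #|E| %/ 2.

Definition complete_graph n (E : graph n) : Prop :=
  forall x y : 'I_n, x != y -> (x, y) \in E.

Definition complete_graphb n (E : graph n) : bool :=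
  [forall x : 'I_n, forall y : 'I_n, (x != y) ==> ((x, y) \in E)].

Definition nbhd n (E : graph n) (x : 'I_n) : {set 'I_n} :=
  [set v | (x, v) \in E].

Definition deg n (E : graph n) (x : 'I_n) : nat := #|nbhd E x|.

(* A round outcome: every node x chooses an ordered pair (v,w) of
   neighbours.  Probability that node x chooses (v,w): 1/deg(x)^2 if both
   are neighbours of x (independent uniform choices).  (For an isolated
   node -- which never occurs for connected graphs with n >= 2 -- we let it
   deterministically "choose" (x,x), which adds nothing.) *)
Definition choice_weight n (E : graph n) (x : 'I_n) (p : 'I_n * 'I_n) : R :=
  if deg E x == 0%N then (if p == (x, x) then 1%R else 0%R)
  else if (p.1 \in nbhd E x) && (p.2 \in nbhd E x)
       then (/ (INR (deg E x) * INR (deg E x)))%R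
       else 0%R.

Definition round_weight n (E : graph n) (c : {ffun 'I_n -> 'I_n * 'I_n}) : R :=
  \big[Rmult/1%R]_(x : 'I_n) choice_weight E x (c x).

Definition step n (E : graph n) (c : {ffun 'I_n -> 'I_n * 'I_n}) : graph n :=
  E :|: [set p : 'I_n * 'I_n | [exists x : 'I_n,
          (p.1 != p.2) && ((c x == p) || (c x == (p.2, p.1)))]].

(* prob_complete t E = Pr[ G_t is complete ] for the triangulation process
   started from G_0 = E (Markov chain, by first-step decomposition). *)
Fixpoint prob_complete n (t : nat) (E : graph n) : R :=
  match t with
  | 0 => if complete_graphb E then 1%R else 0%R
  | t'.+1 => \big[Rplus/0%R]_(c : {ffun 'I_n -> 'I_n * 'I_n})
               (round_weight E c * prob_complete t' (step E c))%R
  end.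

(* Let m(G) be the number of ordered pairs of distinct vertices that are not
   edges of G; a graph k edges short of complete has m >= k.  In one round
   only the "hitting" vertices, those whose chosen pair is missing, change
   the graph, and each of them removes at most two missing ordered pairs.
   The choices of the vertices are independent, so the generating function
   of the number of hitting vertices factors over the vertices.

   With r = 1 - 192/n, a_t = 1 - r^t / 2 and the cap L = n/8 we show that
     Phi_t(m) = a_t ^ min(m, L) + t * exp(40 - L/2)
   is a supermartingale: E[Phi_t(m(G_1))] <= Phi_{t+1}(m(G_0)).  When at
   most n/4 pairs are missing all degrees are >= n/2, hitting is rare, and
   the base a_t improves to a_{t+1}; otherwise falling below the cap needs
   L/2 hits, which has probability exp(-Omega(n)).  As Phi_0 bounds the
   indicator of completeness, Pr[G_t complete] <= Phi_t(m(G_0)), and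
   evaluating at t = n ln(k) / 3072 with s = k^(1/8) bounds both terms by
   O(exp(-s^2)) = O(exp(-k^(1/4))). *)
From Stdlib Require Import Lra Lia.
From Stdlib Require Znat.
From mathcomp Require Import zify.
From HB Require Import structures.
From mathcomp Require Import all_boot.
From Stdlib Require Import Reals.
Set Implicit Arguments. Unset Strict Implicit. Unset Printing Implicit Defensive.

Lemma Rplus_assoc' : associative Rplus.
Proof. by move=> x y z; rewrite Rplus_assoc. Qed.
Lemma Rmult_assoc' : associative Rmult.
Proof. by move=> x y z; rewrite Rmult_assoc. Qed.
HB.instance Definition _ :=
  Monoid.isComLaw.Build R 0%R Rplus Rplus_assoc' Rplus_comm Rplus_0_l.
HB.instance Definition _ :=
  Monoid.isComLaw.Build R 1%R Rmult Rmult_assoc' Rmult_comm Rmult_1_l.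
HB.instance Definition _ := Monoid.isMulLaw.Build R 0%R Rmult Rmult_0_l Rmult_0_r.
HB.instance Definition _ :=
  Monoid.isAddLaw.Build R Rmult Rplus Rmult_plus_distr_r Rmult_plus_distr_l.

Open Scope R_scope.

Section RealBigops.
Variables (I : finType) (P : pred I).

Lemma Rsum_le (F G : I -> R) : (forall i, P i -> F i <= G i) ->
  \big[Rplus/0]_(i | P i) F i <= \big[Rplus/0]_(i | P i) G i.
Proof. by move=> FG; apply: (big_ind2 (fun x y => x <= y)) => // *; lra. Qed.

Lemma Rsum_ge0 (F : I -> R) : (forall i, P i -> 0 <= F i) ->
  0 <= \big[Rplus/0]_(i | P i) F i.
Proof. by move=> F0; apply: (big_ind (fun x => 0 <= x)) => // *; lra. Qed.

Lemma Rprod_ge0 (F : I -> R) : (forall i, P i -> 0 <= F i) ->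
  0 <= \big[Rmult/1]_(i | P i) F i.
Proof.
move=> F0; apply: (big_ind (fun x => 0 <= x)) => // [|*]; first lra.
exact: Rmult_le_pos.
Qed.

Lemma Rprod_le (F G : I -> R) : (forall i, P i -> 0 <= F i <= G i) ->
  \big[Rmult/1]_(i | P i) F i <= \big[Rmult/1]_(i | P i) G i.
Proof.
move=> FG.
suff [] : 0 <= \big[Rmult/1]_(i | P i) F i <= \big[Rmult/1]_(i | P i) G i by [].
apply: (big_ind2 (fun x y => 0 <= x <= y)) => [|x1 x2 y1 y2 [? ?] [? ?]|//].
  lra.
by split; [apply: Rmult_le_pos | apply: Rmult_le_compat].
Qed.

Lemma Rsum_const (c : R) : \big[Rplus/0]_(i | P i) c = INR #|P| * c.
Proof.
rewrite big_const; elim: #|P| => [|m IH]; first by rewrite /=; lra.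
by rewrite iterS IH S_INR; lra.
Qed.

Lemma Rprod_const (c : R) : \big[Rmult/1]_(i | P i) c = c ^ #|P|.
Proof. by rewrite big_const; elim: #|P| => [|m IH] //=; rewrite IH. Qed.

Lemma exp_sum (F : I -> R) :
  exp (\big[Rplus/0]_(i | P i) F i) = \big[Rmult/1]_(i | P i) exp (F i).
Proof. by apply: (big_morph exp) => [x y|]; rewrite ?exp_plus ?exp_0. Qed.

End RealBigops.

Section ElementaryBounds.

Lemma exp_le (x y : R) : x <= y -> exp x <= exp y.
Proof. by case/Rle_lt_or_eq_dec => [/exp_increasing/Rlt_le|->] //; right. Qed.

Lemma exp_mulINR (x : R) (m : nat) : exp (x * INR m) = exp x ^ m.
Proof.
elim: m => [|m IH]; first by rewrite /= Rmult_0_r exp_0.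
by rewrite S_INR Rmult_plus_distr_l Rmult_1_r exp_plus IH /=; ring.
Qed.

Lemma pow_antimono (a : R) (m k : nat) : 0 <= a <= 1 -> (m <= k)%nat -> a ^ k <= a ^ m.
Proof.
move=> ha mk; rewrite -(subnKC mk) pow_add.
have : 0 <= a ^ m by apply: pow_le; lra.
have : a ^ (k - m) <= 1 by rewrite -(pow1 (k - m)); apply: pow_incr; lra.
have : 0 <= a ^ (k - m) by apply: pow_le; lra.
nra.
Qed.

(* Linear upper bound for [exp] near 0, from [exp u * exp (-u) = 1]. *)
Lemma exp_le_affine (u : R) : 0 <= u <= 1/2 -> exp u <= 1 + 2 * u.
Proof.
move=> hu; have := exp_ineq1_le (- u); have := exp_pos u.
have : exp u * exp (- u) = 1 by rewrite -exp_plus Rplus_opp_r exp_0.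
nra.
Qed.

Lemma exp_neg_le_affine (x : R) : 0 <= x <= 1/2 -> exp (- (2 * x)) <= 1 - x.
Proof.
move=> hx; have := exp_ineq1_le (2 * x).
have : exp (2 * x) * exp (- (2 * x)) = 1 by rewrite -exp_plus Rplus_opp_r exp_0.
have := exp_pos (- (2 * x)); have := exp_pos (2 * x).
nra.
Qed.

Lemma floor_INR_le (x : R) : 0 <= x -> INR (Z.to_nat (Int_part x)) <= x.
Proof.
move=> hx; have [+ _] := base_Int_part x.
case: (Int_part x) => [|p|p] /= h; try lra.
by rewrite INR_IZR_INZ Znat.positive_nat_Z.
Qed.

End ElementaryBounds.

Section TailEstimates.

Lemma eighth_root (x : R) : 1 <= x ->
  1 <= Rpower x (1/8) /\ Rpower x (1/8) ^ 8 = x /\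
  Rpower x (1/8) ^ 2 = Rpower x (1/4).
Proof.
move=> x1; have x0 : 0 < x by lra.
have s0 : 0 < Rpower x (1/8) by apply: exp_pos.
split; first by rewrite -{1}(Rpower_O _ x0); apply: Rle_Rpower; lra.
rewrite -!(Rpower_pow _ _ s0) !Rpower_mult.
split; last by congr Rpower; rewrite /=; field.
by rewrite (_ : 1/8 * INR 8 = 1) ?Rpower_1 //=; field.
Qed.

Lemma decay_exponent_bound (s j : R) : 1 <= s -> s ^ 4 / 16 <= j ->
  exp (- (j * / (2 * s))) <= exp 1024 * exp (- (s ^ 2)).
Proof.
move=> s1 hj; rewrite -exp_plus; apply: exp_le.
have : s ^ 3 / 32 <= j * / (2 * s).
  apply: (Rmult_le_reg_r (2 * s)); first lra.
  rewrite Rmult_assoc Rinv_l; last lra.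
  by rewrite (_ : s ^ 3 / 32 * (2 * s) = s ^ 4 / 16); [lra | field].
suff : s ^ 2 - s ^ 3 / 32 <= 1024 by lra.
have : 0 <= s ^ 3 by apply: pow_le; lra.
by case: (Rle_lt_dec s 32) => hs /=; nra.
Qed.

Lemma cube_le_exp (N : R) : 1 <= N -> N ^ 3 <= exp 28 * exp (N / 32).
Proof.
move=> N1.
have -> : exp (N / 32) = exp (N / 128) ^ 4.
  by rewrite -exp_mulINR; congr exp; rewrite /=; field.
have : (N / 128) ^ 4 <= exp (N / 128) ^ 4.
  by apply: pow_incr; have := exp_ineq1_le (N / 128); lra.
have : 2 ^ 28 <= exp 28.
  rewrite -[28]Rmult_1_l (_ : 28 = INR 28); last by rewrite /=; lra.
  by rewrite exp_mulINR; apply: pow_incr; have := exp_ineq1_le 1; lra.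
have : N ^ 3 <= 2 ^ 28 * (N / 128) ^ 4 by rewrite /=; nra.
have : 0 <= (N / 128) ^ 4 by apply: pow_le; lra.
have : 0 <= 2 ^ 28 by apply: pow_le; lra.
nra.
Qed.

Lemma exp_neg_sqrt (N w : R) : 0 <= w -> w * w <= N ->
  exp (- (N / 32)) <= exp 8 * exp (- w).
Proof.
move=> w0 wN; rewrite -exp_plus; apply: exp_le.
have : 0 <= (w - 16) * (w - 16) by apply: Rle_0_sqr.
lra.
Qed.

End TailEstimates.

Section MissingPairs.
Variable n : nat.
Implicit Types (E : graph n) (x : 'I_n) (c : {ffun 'I_n -> 'I_n * 'I_n}).

Definition undirected E := forall x y, ((x, y) \in E) = ((y, x) \in E).
Definition loopless E := forall x, (x, x) \notin E.

Definition missing E : {set 'I_n * 'I_n} := [set p | (p.1 != p.2) && (p \notin E)].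
Definition nmissing E : nat := #|missing E|.

Definition non_nbhd E x : {set 'I_n} := [set v | (x != v) && ((x, v) \notin E)].
Definition codeg E x : nat := #|non_nbhd E x|.

Definition low_deg E : {set 'I_n} := [set x | ((deg E x).*2 < n)%nat].

Lemma deg_codeg E x : loopless E -> (deg E x + codeg E x).+1 = n.
Proof.
move=> loopE; rewrite /deg /codeg.
have nbhdU : nbhd E x :|: non_nbhd E x = [set~ x].
  apply/setP => v; rewrite !inE.
  by case: (eqVneq v x) => [->|_]; rewrite ?(negbTE (loopE x)) //=; case: (_ \in E).
have nbhdI : nbhd E x :&: non_nbhd E x = set0.
  by apply/setP => v; rewrite !inE; case: (_ \in E); rewrite ?andbF.
have := cardsU (nbhd E x) (non_nbhd E x).
rewrite nbhdU nbhdI cards0 cardsC1 card_ord.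
have : (0 < n)%nat by apply: leq_ltn_trans (ltn_ord x).
lia.
Qed.

(* Counting the missing ordered pairs by their first vertex. *)
Lemma sum_codeg E : (\sum_x codeg E x)%nat = nmissing E.
Proof.
rewrite /nmissing /codeg.
transitivity (\sum_x \sum_v (if (x, v) \in missing E then 1 else 0))%nat.
  apply: eq_bigr => x _; rewrite -big_mkcond /= -sum1_card.
  by apply: eq_bigl => v; rewrite !inE.
rewrite pair_big /= -sum1_card [RHS]big_mkcond /=.
by apply: eq_bigr => -[a b].
Qed.

Lemma codeg_le_nmissing E x : (codeg E x <= nmissing E)%nat.
Proof. by rewrite -sum_codeg (bigD1 x) //= leq_addr. Qed.

(* Each low-degree vertex misses at least (n-1)/2 others, so there are few
   of them when few pairs are missing. *)
Lemma low_deg_count E : loopless E -> (#|low_deg E| * n.-1 <= (nmissing E).*2)%nat.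
Proof.
move=> loopE; rewrite -sum_codeg -muln2 big_distrl /= -sum1_card big_distrl /=.
apply: leq_trans (_ : \sum_(x in low_deg E) (codeg E x * 2) <= _)%nat.
  apply: leq_sum => x; rewrite inE => lowx.
  by have := deg_codeg x loopE; rewrite -mul2n in lowx; lia.
by rewrite [X in (_ <= X)%nat](bigID [pred x | x \in low_deg E]) leq_addr.
Qed.

Lemma card_edges_missing E : loopless E -> (#|E| + nmissing E = n * n.-1)%nat.
Proof.
move=> loopE; set D := [set p : 'I_n * 'I_n | p.1 != p.2].
have ED : E \subset D.
  apply/subsetP => -[a b] ab; rewrite inE /=; apply/eqP => eab.
  by rewrite eab (negbTE (loopE b)) in ab.
have missingE : missing E = D :\: E by apply/setP => p; rewrite !inE andbC.
have cardD : #|D| = (n * n.-1)%nat.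
  have DC : ~: D = [set (x, x) | x : 'I_n].
    apply/setP => -[a b]; rewrite !inE /= negbK.
    by apply/eqP/imsetP => [<-|[x _ [-> ->]]] //; exists a.
  have := cardsC D; rewrite DC card_imset; last by move=> x y [].
  by rewrite card_prod card_ord -subn1 mulnBr muln1; lia.
rewrite /nmissing missingE cardsD (setIidPr ED) subnKC; first exact: cardD.
exact: subset_leq_card.
Qed.

Lemma nmissing_deficit E k : loopless E -> (1 <= k)%nat ->
  'C(n, 2) = (num_edges E + k)%nat -> (k <= nmissing E /\ k.*2 <= n * n.-1)%nat.
Proof.
move=> loopE k1; rewrite bin2 -divn2 /num_edges => hC.
by have := card_edges_missing loopE; lia.
Qed.

Lemma nmissing_complete E : complete_graphb E -> nmissing E = O.
Proof.
move=> /forallP complE; apply/eqP; rewrite cards_eq0; apply/eqP/setP => -[a b].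
rewrite !inE /=; apply/negbTE; rewrite negb_and negbK.
by move: (complE a) => /forallP /(_ b); rewrite negbK; case: (a == b).
Qed.

Lemma step_undirected E c : undirected E -> undirected (step E c).
Proof.
move=> undirE x y; rewrite /step !inE /= undirE; congr orb.
by apply/existsP/existsP => -[z hz]; exists z; move: hz; rewrite eq_sym orbC.
Qed.

Lemma step_loopless E c : loopless E -> loopless (step E c).
Proof.
move=> loopE x; rewrite /step !inE negb_or loopE /=.
by apply/existsP => -[z]; rewrite eqxx.
Qed.

(* The vertices whose chosen pair is missing: only they can add edges. *)
Definition hitters E c : {set 'I_n} := [set x | c x \in missing E].
Definition nhits E c : nat := #|hitters E c|.

Lemma nhits_le E c : (nhits E c <= n)%nat.
Proof. by rewrite /nhits; apply: leq_trans (max_card _) _; rewrite card_ord. Qed.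

Lemma nmissing_step E c : undirected E ->
  (nmissing E <= nmissing (step E c) + (nhits E c).*2)%nat.
Proof.
move=> undirE; rewrite /nmissing /nhits -addnn.
set H := hitters E c.
pose T1 := [set c z | z in H].
pose T2 := [set ((c z).2, (c z).1) | z in H].
apply: leq_trans (_ : #|missing (step E c) :|: (T1 :|: T2)| <= _)%nat.
  apply: subset_leq_card; apply/subsetP => p; rewrite !inE => /andP [p12 pE].
  rewrite (negbTE pE) p12 /=.
  case: (@existsP _ (fun z => (c z == p) || (c z == (p.2, p.1)))) => [[z]|_] //=.
  case/orP => /eqP cz.
    by apply/orP; left; apply/imsetP; exists z; rewrite // /H inE cz !inE p12 pE.
  apply/orP; right; apply/imsetP; exists z; last by rewrite cz; case: (p).
  by rewrite /H inE cz !inE /= eq_sym p12 /= -undirE; case: (p) pE.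
apply: leq_trans (leq_card_setU _ _) _; rewrite leq_add2l.
by apply: leq_trans (leq_card_setU _ _) _; apply: leq_add; apply: leq_imset_card.
Qed.

End MissingPairs.

Section RoundDistribution.
Variable n : nat.
Implicit Types (E : graph n) (x : 'I_n) (c : {ffun 'I_n -> 'I_n * 'I_n}).

Definition expect E (F : {ffun 'I_n -> 'I_n * 'I_n} -> R) : R :=
  \big[Rplus/0]_c (round_weight E c * F c).

Lemma INR_deg_pos E x : deg E x != O -> 0 < INR (deg E x).
Proof. by move=> d0; apply/lt_0_INR/ltP; rewrite lt0n. Qed.

Lemma choice_weight_ge0 E x p : 0 <= choice_weight E x p.
Proof.
rewrite /choice_weight; case: eqP => [_|/eqP /INR_deg_pos d0].
  by case: eqP => _; lra.
case: ifP => _; last lra.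
by apply/Rlt_le/Rinv_0_lt_compat/Rmult_lt_0_compat.
Qed.

Lemma choice_weight_le E x p : deg E x != O ->
  choice_weight E x p <= / (INR (deg E x) * INR (deg E x)).
Proof.
move=> d0; rewrite /choice_weight (negbTE d0).
have : 0 < / (INR (deg E x) * INR (deg E x)).
  by apply/Rinv_0_lt_compat/Rmult_lt_0_compat; apply: INR_deg_pos.
by case: ifP => _; lra.
Qed.

Lemma choice_weight_sum E x : \big[Rplus/0]_p choice_weight E x p = 1.
Proof.
rewrite /choice_weight; case: eqP => [_|/eqP d0].
  rewrite (bigD1 (x, x)) //= eqxx big1; first lra.
  by move=> p /negbTE ->.
rewrite -big_mkcond Rsum_const.
have -> : #|[pred p : 'I_n * 'I_n | (p.1 \in nbhd E x) && (p.2 \in nbhd E x)]|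
          = (deg E x * deg E x)%nat.
  by rewrite /deg -cardsX; apply: eq_card => p; rewrite !inE.
have := INR_deg_pos d0; rewrite mult_INR => ?; field; lra.
Qed.

Definition hit_prob E x : R := \big[Rplus/0]_(p in missing E) choice_weight E x p.

Lemma hit_prob_ge0 E x : 0 <= hit_prob E x.
Proof. by apply: Rsum_ge0 => p _; apply: choice_weight_ge0. Qed.

Lemma hit_prob_le1 E x : hit_prob E x <= 1.
Proof.
rewrite -(choice_weight_sum E x) /hit_prob big_mkcond /=.
apply: Rsum_le => p _; have := choice_weight_ge0 E x p.
by case: (p \in missing E); lra.
Qed.

Lemma hit_prob_high E x : (0 < n)%nat -> (n <= (deg E x).*2)%nat ->
  hit_prob E x <= 4 * INR (nmissing E) * / (INR n * INR n).
Proof.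
move=> n0 highx.
have d0 : deg E x != O by apply/eqP => d0; rewrite d0 /= in highx; lia.
have dpos := INR_deg_pos d0.
have npos : 0 < INR n by apply/lt_0_INR/ltP.
have n2d : INR n <= 2 * INR (deg E x).
  by rewrite -mul2n in highx; have := le_INR _ _ (elimT leP highx); rewrite mult_INR.
apply: Rle_trans (_ : \big[Rplus/0]_(p in missing E)
                        / (INR (deg E x) * INR (deg E x)) <= _).
  by apply: Rsum_le => p _; apply: choice_weight_le.
rewrite Rsum_const Rmult_assoc (Rmult_comm 4) Rmult_assoc.
apply: Rmult_le_compat_l; first exact: pos_INR.
have -> : / (INR (deg E x) * INR (deg E x)) =
          4 * / ((2 * INR (deg E x)) * (2 * INR (deg E x))) by field; lra.
rewrite Rmult_comm; apply: Rmult_le_compat_r; first lra.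
by apply: Rinv_le_contravar; nra.
Qed.

(* When at most n/4 pairs are missing every vertex has degree >= n/2, and
   the expected number of hitting vertices is O(missing/n). *)
Lemma sum_hit_prob_sparse E : loopless E -> (2 <= n)%nat ->
  (4 * nmissing E <= n)%nat ->
  \big[Rplus/0]_x hit_prob E x <= 4 * INR (nmissing E) / INR n.
Proof.
move=> loopE n2 sparse.
apply: Rle_trans (_ : \big[Rplus/0]_x (4 * INR (nmissing E) * / (INR n * INR n))
                       <= _).
  apply: Rsum_le => x _; apply: hit_prob_high; first lia.
  by have := deg_codeg x loopE; have := codeg_le_nmissing E x; lia.
have : 0 < INR n by apply/lt_0_INR/ltP; lia.
by rewrite Rsum_const cardT size_enum_ord => ?; right; field; lra.
Qed.

(* In general, the low-degree vertices contribute at most one each. *)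
Lemma sum_hit_prob E : loopless E -> (2 <= n)%nat ->
  \big[Rplus/0]_x hit_prob E x <= 4 * INR (nmissing E) / INR n + INR #|low_deg E|.
Proof.
move=> loopE n2; have npos : 0 < INR n by apply/lt_0_INR/ltP; lia.
apply: Rle_trans (_ : \big[Rplus/0]_x (4 * INR (nmissing E) * / (INR n * INR n)
                       + (if x \in low_deg E then 1 else 0)) <= _).
  apply: Rsum_le => x _; have := hit_prob_ge0 E x; have := hit_prob_le1 E x.
  have : 0 <= 4 * INR (nmissing E) * / (INR n * INR n).
    apply: Rmult_le_pos; first by have := pos_INR (nmissing E); lra.
    by apply/Rlt_le/Rinv_0_lt_compat; nra.
  case: ifP => lowx; first lra.
  have : hit_prob E x <= 4 * INR (nmissing E) * / (INR n * INR n).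
    by apply: hit_prob_high; [lia | move: lowx; rewrite inE => /negbT; lia].
  lra.
rewrite big_split -big_mkcond !Rsum_const cardT size_enum_ord.
have -> : #|[pred x | x \in low_deg E]| = #|low_deg E| by apply: eq_card.
by apply: Rplus_le_compat; right; [field; lra | lra].
Qed.

Lemma round_weight_ge0 E c : 0 <= round_weight E c.
Proof. by apply: Rprod_ge0 => x _; apply: choice_weight_ge0. Qed.

(* The vertices choose independently: the expectation of a product of
   functions of the individual choices factors. *)
Lemma expect_prod E (g : 'I_n -> 'I_n * 'I_n -> R) :
  expect E (fun c => \big[Rmult/1]_x g x (c x)) =
  \big[Rmult/1]_x \big[Rplus/0]_p (choice_weight E x p * g x p).
Proof.
rewrite bigA_distr_bigA; apply: eq_bigr => c _.
by rewrite /round_weight -big_split.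
Qed.

Lemma round_weight_sum E : \big[Rplus/0]_c round_weight E c = 1.
Proof.
transitivity (expect E (fun c => \big[Rmult/1]_x (fun _ _ => 1) x (c x))).
  by apply: eq_bigr => c _; rewrite Rprod_const pow1 Rmult_1_r.
rewrite (expect_prod E (fun _ _ => 1)) big1 // => x _; rewrite -[RHS](choice_weight_sum E x).
by apply: eq_bigr => p _; rewrite Rmult_1_r.
Qed.

Lemma expect_le E (F G : {ffun 'I_n -> 'I_n * 'I_n} -> R) :
  (forall c, F c <= G c) -> expect E F <= expect E G.
Proof.
move=> FG; apply: Rsum_le => c _.
by apply: Rmult_le_compat_l; [apply: round_weight_ge0 | apply: FG].
Qed.

Lemma expect_add_const E (F : {ffun 'I_n -> 'I_n * 'I_n} -> R) (b : R) :
  expect E (fun c => F c + b) = expect E F + b.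
Proof.
transitivity (expect E F + b * \big[Rplus/0]_c round_weight E c).
  by rewrite /expect big_distrr -big_split; apply: eq_bigr => c _ /=; ring.
by rewrite round_weight_sum Rmult_1_r.
Qed.

Lemma expect_scale E (F : {ffun 'I_n -> 'I_n * 'I_n} -> R) (b : R) :
  expect E (fun c => b * F c) = b * expect E F.
Proof. by rewrite /expect big_distrr; apply: eq_bigr => c _ /=; ring. Qed.

Lemma expect_pow_nhits E (lam : R) :
  expect E (fun c => lam ^ nhits E c) =
  \big[Rmult/1]_x (1 + (lam - 1) * hit_prob E x).
Proof.
pose g x p := if p \in missing E then lam else 1.
have -> : expect E (fun c => lam ^ nhits E c) =
          expect E (fun c => \big[Rmult/1]_x g x (c x)).
  apply: eq_bigr => c _; rewrite -big_mkcond Rprod_const /nhits.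
  by congr (_ * _ ^ _); apply: eq_card => x; rewrite /hitters inE.
rewrite expect_prod; apply: eq_bigr => x _; rewrite /hit_prob [in RHS]big_mkcond /=.
rewrite -[X in X + _](choice_weight_sum E x) big_distrr -big_split.
by apply: eq_bigr => p _ /=; rewrite /g; case: (p \in missing E); ring.
Qed.

(* Since 1 + y <= exp y, the generating function is at most
   exp((lam - 1) * sum of the hitting probabilities). *)
Lemma expect_pow_nhits_le E (lam : R) : 1 <= lam ->
  expect E (fun c => lam ^ nhits E c) <=
  exp ((lam - 1) * \big[Rplus/0]_x hit_prob E x).
Proof.
move=> lam1; rewrite expect_pow_nhits big_distrr exp_sum.
apply: Rprod_le => x _; split; last exact: exp_ineq1_le.
by have := hit_prob_ge0 E x; nra.
Qed.

Lemma prob_complete_ge0 t E : 0 <= prob_complete t E.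
Proof.
elim: t E => [|t IH] E /=; first by case: ifP => _; lra.
by apply: Rsum_ge0 => c _; apply: Rmult_le_pos; [apply: round_weight_ge0 | apply: IH].
Qed.

Lemma prob_complete_le1 t E : prob_complete t E <= 1.
Proof.
elim: t E => [|t IH] E /=; first by case: ifP => _; lra.
rewrite -(round_weight_sum E); apply: Rsum_le => c _.
have := round_weight_ge0 E c; have := IH (step E c).
by have := prob_complete_ge0 t (step E c); nra.
Qed.

End RoundDistribution.

(* The numerical heart of the sparse regime: with lam = 1/a^2, one round
   turns a^m into at most (a * exp((lam-1) * 12/N))^m, and this base is
   below the next base 1 - (1-a)(1-192/N) of the potential. *)
Lemma contraction_base (a N : R) : 1/2 <= a <= 1 -> 384 <= N ->
  a * exp ((/ (a * a) - 1) * (12 / N)) <= 1 - (1 - a) * (1 - 192 / N).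
Proof.
move=> ha hN.
have invN : 0 < / N <= / 384.
  by split; [apply: Rinv_0_lt_compat | apply: Rinv_le_contravar]; lra.
have lam1 : 0 <= / (a * a) - 1 <= 8 * (1 - a).
  have -> : / (a * a) - 1 = (1 - a) * (1 + a) / (a * a) by field; lra.
  have aa0 : 0 < a * a by nra.
  split; first by apply: Rmult_le_pos; [nra | apply/Rlt_le/Rinv_0_lt_compat].
  apply: (Rmult_le_reg_r (a * a)) => //.
  rewrite /Rdiv Rmult_assoc Rinv_l ?Rmult_1_r; last lra.
  have : 1 + a <= 8 * (a * a) by nra.
  have : 0 <= 1 - a by lra.
  nra.
set u := (/ (a * a) - 1) * (12 / N).
have hu : 0 <= u <= 96 * (1 - a) / N.
  rewrite /u /Rdiv; split; first by apply: Rmult_le_pos; lra.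
  have : (/ (a * a) - 1) * (12 * / N) <= 8 * (1 - a) * (12 * / N).
    by apply: Rmult_le_compat_r; lra.
  lra.
have u_small : u <= 1/2.
  apply: Rle_trans (proj2 hu) _; rewrite /Rdiv.
  have : (1 - a) * / N <= 1/2 * / 384 by apply: Rmult_le_compat; lra.
  lra.
have : a * exp u <= a * (1 + 2 * u).
  by apply: Rmult_le_compat_l; [lra | apply: exp_le_affine; lra].
have -> : 1 - (1 - a) * (1 - 192 / N) = a + 192 * (1 - a) / N by field; lra.
move: hu; rewrite /Rdiv; nra.
Qed.

Section Potential.
Variable n : nat.
Hypothesis n_large : (384 <= n)%nat.
Implicit Types (E : graph n) (x : 'I_n) (c : {ffun 'I_n -> 'I_n * 'I_n}).

(* The cap keeps the dense regime, where a
   single round can remove Theta(n) missing pairs, under control; [err]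
   pays for the unlikely event that a dense graph drops below the cap. *)
Definition cap : nat := n %/ 8.
Definition ratio : R := 1 - 192 / INR n.
Definition base (t : nat) : R := 1 - / 2 * ratio ^ t.
Definition err : R := exp 40 * / exp (INR (cap %/ 2)).
Definition potential (t m : nat) : R := base t ^ minn m cap + INR t * err.

Lemma INR_n_large : 384 <= INR n.
Proof. by have := le_INR _ _ (elimT leP n_large); rewrite /=; lra. Qed.

Lemma ratio_bounds : 1/2 <= ratio <= 1.
Proof.
have := INR_n_large; rewrite /ratio /Rdiv => hn.
have : 0 < / INR n <= / 384.
  by split; [apply: Rinv_0_lt_compat | apply: Rinv_le_contravar]; lra.
lra.
Qed.

Lemma base_bounds t : 1/2 <= base t <= 1.
Proof.
have := ratio_bounds; rewrite /base => hr.
have : 0 <= ratio ^ t <= 1.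
  by split; [apply: pow_le | rewrite -(pow1 t); apply: pow_incr]; lra.
lra.
Qed.

Lemma baseS t : base t.+1 = 1 - (1 - base t) * ratio.
Proof. by rewrite /base /=; ring. Qed.

Lemma base_incr t : base t <= base t.+1.
Proof. by rewrite baseS; have := base_bounds t; have := ratio_bounds; nra. Qed.

Lemma err_ge0 : 0 <= err.
Proof.
apply: Rmult_le_pos; first exact/Rlt_le/exp_pos.
exact/Rlt_le/Rinv_0_lt_compat/exp_pos.
Qed.

Lemma potential_ge0 t m : 0 <= potential t m.
Proof.
have := base_bounds t => hb.
have : 0 <= base t ^ minn m cap by apply: pow_le; lra.
have : 0 <= INR t * err by apply: Rmult_le_pos; [apply: pos_INR | apply: err_ge0].
rewrite /potential; lra.
Qed.

(* Sparse regime: at most n/4 pairs are missing, so every vertex has degree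
   at least n/2 and each hitting vertex removes at most 2 missing pairs. *)
Lemma expect_decay_sparse E (a : R) : undirected E -> loopless E ->
  1/2 <= a <= 1 -> (4 * nmissing E <= n)%nat ->
  expect E (fun c => a ^ minn (nmissing (step E c)) cap) <=
  (a * exp ((/ (a * a) - 1) * (12 / INR n))) ^ minn (nmissing E) cap.
Proof.
move=> undirE loopE ha sparse; set lam := / (a * a).
have hn := INR_n_large.
have lam1 : 1 <= lam.
  by rewrite /lam -Rinv_1; apply: Rinv_le_contravar; nra.
have pointwise c : a ^ minn (nmissing (step E c)) cap <=
                   a ^ minn (nmissing E) cap * lam ^ nhits E c.
  have : (minn (nmissing E) cap <= minn (nmissing (step E c)) cap + 2 * nhits E c)%nat.
    by have := nmissing_step c undirE; rewrite -mul2n; lia.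
  move=> /(pow_antimono (conj (ltac:(lra) : 0 <= a) (proj2 ha))).
  rewrite pow_add pow_mult => h.
  have -> : a ^ minn (nmissing (step E c)) cap =
            a ^ minn (nmissing (step E c)) cap * (a ^ 2 * lam) ^ nhits E c.
    by rewrite (_ : a ^ 2 * lam = 1) ?pow1 ?Rmult_1_r // /lam; field; lra.
  rewrite Rpow_mult_distr -Rmult_assoc; apply: Rmult_le_compat_r => //.
  by apply: pow_le; lra.
have a0 : 0 <= a ^ minn (nmissing E) cap by apply: pow_le; lra.
have missing_cap : INR (nmissing E) <= 3 * INR (minn (nmissing E) cap).
  have : (nmissing E <= 3 * minn (nmissing E) cap)%nat by rewrite /cap; lia.
  by move=> /leP /le_INR; rewrite mult_INR /=; lra.
have hits_bound : \big[Rplus/0]_x hit_prob E x <=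
                  12 / INR n * INR (minn (nmissing E) cap).
  apply: Rle_trans (sum_hit_prob_sparse loopE (ltac:(lia)) sparse) _.
  have : 0 < / INR n by apply: Rinv_0_lt_compat; lra.
  by rewrite /Rdiv; nra.
apply: Rle_trans (expect_le E pointwise) _.
rewrite expect_scale Rpow_mult_distr -exp_mulINR.
apply: Rmult_le_compat_l => //.
apply: Rle_trans (expect_pow_nhits_le E lam1) _; apply: exp_le.
by rewrite Rmult_assoc; apply: Rmult_le_compat_l; lra.
Qed.

(* Dense regime: falling below the cap requires at least cap/2 hitting
   vertices, an event controlled by the exponential moment of [nhits]. *)
Lemma decay_dense_pointwise E c (a : R) : undirected E -> 0 <= a <= 1 ->
  (n < 4 * nmissing E)%nat ->
  a ^ minn (nmissing (step E c)) cap <=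
  / exp (INR (cap %/ 2)) * exp 1 ^ nhits E c + a ^ cap.
Proof.
move=> undirE ha dense.
have e0 := exp_pos (INR (cap %/ 2)).
have tail0 : 0 <= / exp (INR (cap %/ 2)) * exp 1 ^ nhits E c.
  by apply: Rmult_le_pos; [apply/Rlt_le/Rinv_0_lt_compat | apply/pow_le/Rlt_le/exp_pos].
have cap0 : 0 <= a ^ cap by apply: pow_le; lra.
case: (leqP cap (nmissing (step E c))) => capc; first lra.
have : (cap %/ 2 <= nhits E c)%nat.
  by have := nmissing_step c undirE; move: capc dense; rewrite /cap; lia.
move=> /leP /le_INR /exp_le; rewrite -[INR (nhits E c)]Rmult_1_l exp_mulINR => h.
have : a ^ nmissing (step E c) <= 1.
  by rewrite -(pow_O a); apply: pow_antimono; [lra | lia].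
have : 1 <= / exp (INR (cap %/ 2)) * exp 1 ^ nhits E c.
  apply: (Rmult_le_reg_l (exp (INR (cap %/ 2)))) => //.
  have -> : exp (INR (cap %/ 2)) * (/ exp (INR (cap %/ 2)) * exp 1 ^ nhits E c) =
            exp 1 ^ nhits E c by field; lra.
  lra.
lra.
Qed.

(* With at most 3n missing pairs, only O(1) vertices have degree below n/2,
   so the expected value of e^nhits is O(1). *)
Lemma expect_exp_nhits E : loopless E -> (nmissing E <= 3 * n)%nat ->
  expect E (fun c => exp 1 ^ nhits E c) <= exp 40.
Proof.
move=> loopE mid; have hn := INR_n_large.
have e1 : 1 <= exp 1 by have := exp_ineq1_le 1; lra.
apply: Rle_trans (expect_pow_nhits_le E e1) _.
apply: exp_le.
have hq := sum_hit_prob loopE (ltac:(lia) : (2 <= n)%nat).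
have : (#|low_deg E| <= 7)%nat by have := low_deg_count loopE; nia.
move=> /leP /le_INR low7.
have {low7} : INR #|low_deg E| <= 7 by move: low7; rewrite /=; lra.
have : 4 * INR (nmissing E) / INR n <= 12.
  have : INR (nmissing E) <= 3 * INR n.
    by have := le_INR _ _ (elimT leP mid); rewrite mult_INR /=; lra.
  move=> h; apply: (Rmult_le_reg_r (INR n)); first lra.
  by rewrite /Rdiv Rmult_assoc Rinv_l; lra.
move=> ? ?; have : \big[Rplus/0]_x hit_prob E x <= 19 by lra.
have : 0 <= \big[Rplus/0]_x hit_prob E x.
  by apply: Rsum_ge0 => x _; apply: hit_prob_ge0.
have := exp_le_3; nra.
Qed.

(* Dense regime: the capped power drops below a^cap only with probability
   [err]; when more than 3n pairs are missing it cannot drop at all. *)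
Lemma expect_decay_dense E (a : R) : undirected E -> loopless E ->
  0 <= a <= 1 -> (n < 4 * nmissing E)%nat ->
  expect E (fun c => a ^ minn (nmissing (step E c)) cap) <= a ^ cap + err.
Proof.
move=> undirE loopE ha dense; have := err_ge0.
case: (leqP (nmissing E) (3 * n)) => mid; last first.
  (* Far from complete: even n hitting vertices stay above the cap. *)
  have far c : minn (nmissing (step E c)) cap = cap.
    by have := nmissing_step c undirE; have := nhits_le E c; rewrite /cap; lia.
  rewrite /expect; under eq_bigr do rewrite far Rmult_comm.
  by rewrite -big_distrr /= round_weight_sum; lra.
move=> _; apply: Rle_trans (expect_le E (fun c => decay_dense_pointwise c undirE ha dense)) _.
rewrite expect_add_const expect_scale Rplus_comm /err Rmult_comm.
apply/Rplus_le_compat_l/Rmult_le_compat_r; last exact: expect_exp_nhits.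
exact/Rlt_le/Rinv_0_lt_compat/exp_pos.
Qed.

Lemma potential_step E t : undirected E -> loopless E ->
  expect E (fun c => potential t (nmissing (step E c))) <= potential t.+1 (nmissing E).
Proof.
move=> undirE loopE; rewrite /potential expect_add_const S_INR.
suff : expect E (fun c => base t ^ minn (nmissing (step E c)) cap)
         <= base t.+1 ^ minn (nmissing E) cap + err by lra.
have hb := base_bounds t; have hb1 := base_bounds t.+1; have err0 := err_ge0.
case: (leqP (4 * nmissing E) n) => regime.
  apply: Rle_trans (expect_decay_sparse undirE loopE hb regime) _.
  have : (base t * exp ((/ (base t * base t) - 1) * (12 / INR n))) ^
            minn (nmissing E) cap <= base t.+1 ^ minn (nmissing E) cap.
    apply: pow_incr; split; first by apply: Rmult_le_pos; [lra | apply/Rlt_le/exp_pos].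
    by rewrite baseS; apply: contraction_base => //; apply: INR_n_large.
  lra.
have -> : minn (nmissing E) cap = cap by rewrite /cap; lia.
have : base t ^ cap <= base t.+1 ^ cap by apply: pow_incr; have := base_incr t; lra.
have := expect_decay_dense undirE loopE (ltac:(lra) : 0 <= base t <= 1) regime.
lra.
Qed.

Lemma prob_complete_le_potential t E : undirected E -> loopless E ->
  prob_complete t E <= potential t (nmissing E).
Proof.
elim: t E => [|t IH] E undirE loopE /=.
  case: ifP => complE; last exact: potential_ge0.
  by rewrite nmissing_complete // /potential min0n pow_O /= Rmult_0_l; lra.
apply: Rle_trans (potential_step t undirE loopE).
apply: expect_le => c; apply: IH; [exact: step_undirected | exact: step_loopless].
Qed.

Lemma ratio_pow_lower t (s : R) : 1 <= s -> INR t <= INR n * ln s / 384 ->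
  / s <= ratio ^ t.
Proof.
move=> s1 ht; have hn := INR_n_large.
apply: Rle_trans (_ : exp (- (2 * (192 / INR n))) ^ t <= _); last first.
  apply: pow_incr; split; first exact/Rlt_le/exp_pos.
  rewrite /ratio; apply: exp_neg_le_affine; split.
    by apply: Rmult_le_pos; [lra | apply/Rlt_le/Rinv_0_lt_compat; lra].
  by apply: (Rmult_le_reg_r (INR n)); [lra | rewrite /Rdiv Rmult_assoc Rinv_l; lra].
have -> : / s = exp (- ln s) by rewrite exp_Ropp exp_ln //; lra.
rewrite -exp_mulINR.
apply: exp_le; suff : 2 * (192 / INR n) * INR t <= ln s by lra.
apply: Rle_trans (_ : 2 * (192 / INR n) * (INR n * ln s / 384) <= _).
  apply: Rmult_le_compat_l => //; apply: Rmult_le_pos; first lra.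
  by apply/Rlt_le/Rdiv_lt_0_compat; lra.
by right; field; lra.
Qed.

Lemma minn_cap_lower m (y : R) : y <= INR m -> y <= INR n -> y / 16 <= INR (minn m cap).
Proof.
move=> ym yn; have := pos_INR m; case: (leqP m cap) => _ m0; first lra.
have : (n <= 16 * cap)%nat by rewrite /cap; lia.
by move=> /leP /le_INR; rewrite mult_INR /=; lra.
Qed.

Lemma decay_term_bound t m (s : R) : 1 <= s -> / s <= ratio ^ t ->
  s ^ 4 / 16 <= INR (minn m cap) ->
  base t ^ minn m cap <= exp 1024 * exp (- s ^ 2).
Proof.
move=> s1 hr hm; have hb := base_bounds t.
apply: Rle_trans (decay_exponent_bound s1 hm).
apply: Rle_trans (_ : exp (- (1 - base t)) ^ minn m cap <= _).
  by apply: pow_incr; split; [lra | have := exp_ineq1_le (- (1 - base t)); lra].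
rewrite -exp_mulINR; apply: exp_le; rewrite Rinv_mult.
have : / 2 * / s <= 1 - base t by rewrite /base; lra.
have := pos_INR (minn m cap); nra.
Qed.

(* The accumulated error t * err is exp(-Omega(n)) for polynomially many
   rounds, hence at most exp(77 - w) when w^2 <= n. *)
Lemma error_term_bound t (w : R) : INR t <= INR n ^ 3 -> 0 <= w -> w * w <= INR n ->
  INR t * err <= exp 77 * exp (- w).
Proof.
move=> ht w0 wn; have hn := INR_n_large.
have err_le : err <= exp 41 * (exp (- (INR n / 32)) * exp (- (INR n / 32))).
  rewrite /err -exp_Ropp -!exp_plus; apply: exp_le.
  have : (n <= 16 * (cap %/ 2) + 16)%nat by rewrite /cap; lia.
  by move=> /leP /le_INR; rewrite plus_INR mult_INR /=; lra.
set X := exp (- (INR n / 32)).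
have X0 : 0 <= X by apply/Rlt_le/exp_pos.
have tX : INR t * X <= exp 28.
  have e32 : exp (INR n / 32) * X = 1 by rewrite -exp_plus Rplus_opp_r exp_0.
  have := cube_le_exp (ltac:(lra) : 1 <= INR n).
  have := exp_pos 28; have := exp_pos (INR n / 32); nra.
have := exp_neg_sqrt w0 wn; rewrite -/X => Xw.
have -> : exp 77 * exp (- w) = exp 41 * (exp 28 * (exp 8 * exp (- w))).
  by rewrite -!exp_plus; congr exp; ring.
apply: Rle_trans (_ : exp 41 * (INR t * X * X) <= _).
  rewrite (_ : exp 41 * (INR t * X * X) = INR t * (exp 41 * (X * X))); last ring.
  by apply: Rmult_le_compat_l => //; apply: pos_INR.
apply: Rmult_le_compat_l; first exact/Rlt_le/exp_pos.
apply: Rmult_le_compat => //; apply: Rmult_le_pos => //; apply: pos_INR.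
Qed.

End Potential.

(* For fewer than 384 vertices the bound is trivial: k <= n^2 forces
   k^(1/4) <= 20. *)
Lemma prob_complete_small n (E : graph n) t k : (n < 384)%nat -> (1 <= k)%nat ->
  (k.*2 <= n * n.-1)%nat ->
  prob_complete t E <= exp 20 * exp (- Rpower (INR k) (1/4)).
Proof.
move=> n_small k1 kn.
have k_ge1 : 1 <= INR k by apply: (le_INR 1); apply/leP.
have [s1 [s8 <-]] := eighth_root k_ge1.
set s := Rpower (INR k) (1/8) in s1 s8 *.
have : INR k <= 384 * 384.
  have : (k <= 384 * 384)%nat by nia.
  by move=> /leP /le_INR; rewrite mult_INR /=; lra.
rewrite -s8 => s8_small.
have s4 : s ^ 4 <= 384.
  have : 0 <= s ^ 4 by apply: pow_le; lra.
  by rewrite (_ : s ^ 8 = s ^ 4 * s ^ 4) in s8_small; [nra | rewrite -pow_add].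
have s2 : s ^ 2 <= 20.
  have : 0 <= s ^ 2 by apply: pow_le; lra.
  by rewrite (_ : s ^ 4 = s ^ 2 * s ^ 2) in s4; [nra | rewrite -pow_add].
apply: Rle_trans (prob_complete_le1 t E) _.
rewrite -exp_plus -exp_0; apply: exp_le; lra.
Qed.

Lemma prob_complete_large n (E : graph n) k t : (384 <= n)%nat ->
  simple_graph E -> (1 <= k)%nat -> 'C(n, 2) = (num_edges E + k)%nat ->
  INR t <= INR n * ln (INR k) / 3072 ->
  prob_complete t E <= (exp 1024 + exp 77) * exp (- Rpower (INR k) (1/4)).
Proof.
move=> n_large [undirE loopE] k1 hC ht.
have [k_missing k_pairs] := nmissing_deficit loopE k1 hC.
have hn := INR_n_large n_large.
have k_ge1 : 1 <= INR k by apply: (le_INR 1); apply/leP.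
have [s1 [s8 <-]] := eighth_root k_ge1.
set s := Rpower (INR k) (1/8) in s1 s8 *.
have kn : s ^ 4 * s ^ 4 <= INR n * INR n.
  rewrite -pow_add s8 -mult_INR; apply/le_INR/leP.
  by apply: leq_trans (_ : k <= n * n.-1)%nat _; [lia | rewrite leq_mul2l leq_pred orbT].
have s4 : s ^ 4 <= INR n.
  have : 0 <= s ^ 4 by apply: pow_le; lra.
  nra.
apply: Rle_trans (prob_complete_le_potential n_large t undirE loopE) _.
rewrite /potential Rmult_plus_distr_r; apply: Rplus_le_compat.
  apply: decay_term_bound => //.
    apply: ratio_pow_lower => //; move: ht.
    by rewrite -s8 ln_pow /=; lra.
  apply: minn_cap_lower => //; apply: Rle_trans (_ : s ^ 8 <= _).
    by apply: Rle_pow; [exact: s1 | lia].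
  by rewrite s8; apply/le_INR/leP.
apply: error_term_bound => //; last by rewrite -pow_add.
  have : ln (INR k) <= INR n * INR n.
    have := exp_ineq1_le (ln (INR k)); rewrite exp_ln; last lra.
    by move: kn; rewrite -pow_add s8; lra.
  by rewrite /=; nra.
by apply: pow_le; lra.
Qed.

Close Scope R_scope.

Theorem theorem9 :
  exists c C : R, (0 < c)%R /\ (0 < C)%R /\
    forall (n : nat) (E : graph n) (k : nat),
      simple_graph E -> connected_graph E ->
      (1 <= k)%N ->
      'C(n, 2) = (num_edges E + k)%N ->
      (prob_complete (Z.to_nat (Int_part (c * INR n * ln (INR k)))) E
         <= C * exp (- Rpower (INR k) (1 / 4)))%R.
Proof.
exists (1/3072)%R, (exp 1024 + exp 77 + exp 20)%R.
have e1024 := exp_pos 1024; have e77 := exp_pos 77; have e20 := exp_pos 20.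
do 2 (split; first lra).
move=> n E k simpleE _ k1 hC; set t := Z.to_nat _.
have decay0 := exp_pos (- Rpower (INR k) (1/4)).
case: (leqP 384 n) => n_size.
  have lnk : (0 <= ln (INR k))%R.
    have k_ge1 : (1 <= INR k)%R by apply: (le_INR 1); apply/leP.
    case: (Rle_lt_dec 0 (ln (INR k))) => // /exp_increasing.
    by rewrite exp_0 exp_ln; lra.
  have ht : (INR t <= INR n * ln (INR k) / 3072)%R.
    apply: Rle_trans (floor_INR_le _) _; last by right; field.
    by apply: Rmult_le_pos; [apply: Rmult_le_pos; [lra | apply: pos_INR] | ].
  by apply: Rle_trans (prob_complete_large n_size simpleE k1 hC ht) _; nra.
have [_ k_pairs] := nmissing_deficit simpleE.2 k1 hC.
by apply: Rle_trans (prob_complete_small E t n_size k1 k_pairs) _; nra.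
Qed.
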